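(* In the $m$-type setting described in the context: (1) if $x_i>1$ for every type $i$, then diffusion occurs from a small seed; (2) if $x_i\le1$ for every type $i$, then diffusion does not occur from a small seed; (3) if there is some type $i$ with $\pi_{ii}x_i>1$, then diffusion occurs from a small seed; (4) if there is a nonempty subset of types $S\subseteq\{1,\dots,m\}$ such that $\sum_{j\in S}\pi_{ij}x_j>1$ for each $i\in S$, then diffusion occurs from a small seed.
   Context: There are $m\ge1$ types. $\Pi=(\pi_{ij})$ is a nonnegative row-stochastic primitive $m\times m$ matrix ($\pi_{ij}$ is the probability that a meeting of a type-$i$ agent is with a type-$j$ agent). For each type $i$: $P_i$ is a degree distribution on the nonnegative integers; $w_i(d)>0$ are degree weights; $f_i(d,a)$, $g_i(d,a)$ ($0\le a\le d$) are adoption and abandonment rates satisfying: $f_i(d,0)=0$; $f_i(d,a)$ nondecreasing in $a$; $f_i(d,1)>0$ for some $d$ with $P_i(d)>0$; $g_i(d,0)>0$; $g_i(d,a)$ nonincreasing in $a$. Let $x_i=\sum_dP_i(d)w_i(d)\,d\,\frac{f_i(d,1)}{g_i(d,0)}$, assumed finite; it is positive. $A$ is the $m\times m$ matrix with $A_{ij}=\pi_{ij}x_j$. Diffusion occurs from a small seed means: for every $\varepsilon>0$ there exists $v\in\mathbb{R}^m$ with $0<v_i<\varepsilon$ and $(Av)_i>v_i$ for all $i$. (The condition $x_i>1$ corresponds to diffusion within type $i$ when isolated.) *)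

From HB Require Import structures.
From mathcomp Require Import all_boot all_order all_algebra.
From mathcomp Require Import all_classical all_reals all_analysis.
Set Implicit Arguments. Unset Strict Implicit. Unset Printing Implicit Defensive.
Import Order.TTheory GRing.Theory Num.Theory.
Import numFieldNormedType.Exports.
Local Open Scope ring_scope.
Local Open Scope classical_set_scope.

Definition row_stochastic (R : realType) (m : nat) (Pi : 'M[R]_m) : Prop :=
  (forall i j, 0 <= Pi i j) /\ (forall i, \sum_j Pi i j = 1).

(* k-th matrix power (works for any m, including m not of the form n.+1) *)
Definition mxpow (R : realType) (m : nat) (A : 'M[R]_m) (k : nat) : 'M[R]_m :=
  iter k (mulmx A) 1%:M.

Definition primitive (R : realType) (m : nat) (A : 'M[R]_m) : Prop :=
  exists k, (0 < k)%N /\ forall i j, 0 < mxpow A k i j.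

Definition degree_distribution (R : realType) (P : nat -> R) : Prop :=
  (forall d, 0 <= P d) /\ series P @ \oo --> (1 : R^o).

Definition xterm (R : realType) (P w : nat -> R) (f g : nat -> nat -> R)
  (d : nat) : R := P d * w d * d%:R * f d 1%N / g d 0%N.

Definition xval (R : realType) (P w : nat -> R) (f g : nat -> nat -> R) : R :=
  limn (series (xterm P w f g)).

Definition Amx (R : realType) (m : nat) (Pi : 'M[R]_m) (x : 'I_m -> R) : 'M[R]_m :=
  \matrix_(i, j) (Pi i j * x j).

Definition diffusion_small_seed (R : realType) (m : nat) (A : 'M[R]_m) : Prop :=
  forall eps : R, 0 < eps ->
    exists v : 'cV[R]_m, forall i,
      0 < v i 0 < eps /\ v i 0 < (A *m v) i 0.

From HB Require Import structures.
From mathcomp Require Import all_boot all_order all_algebra.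
From mathcomp Require Import all_classical all_reals all_analysis.
Import Order.TTheory GRing.Theory Num.Theory.
Import numFieldNormedType.Exports.
Local Open Scope ring_scope.

(* The matrix A = (pi_ij x_j) is nonnegative with the same zero pattern as Pi,
   so it is primitive and some power B = A^k is entrywise positive.  If a
   nonnegative u satisfies A u >= u with strict inequality somewhere, then
   v = B u is positive and A v - v = B (A u - u) is positive; scaling v down
   gives seeds of any size.  The indicator vector of S is such a u under the
   hypothesis of (4), and (1) and (3) are the cases S = all types and
   S = {i}.  For (2), every row sum of A is at most 1, so A v cannot exceed v
   at a coordinate where v is maximal. *)

Section NonnegativeSums.
Variables (R : numDomainType) (I : finType).

Lemma psumr_gt0 (F : I -> R) i :
  (forall j, 0 <= F j) -> 0 < F i -> 0 < \sum_j F j.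
Proof.
move=> F_ge0 Fi_gt0; rewrite (bigD1 i) //= ltr_pwDl //.
by apply: sumr_ge0 => j _.
Qed.

Lemma pmulr_gt0_factors (a b : R) :
  0 <= a -> 0 <= b -> 0 < a * b -> 0 < a /\ 0 < b.
Proof.
rewrite !le0r => /predU1P[-> | a_gt0]; first by rewrite mul0r ltxx.
by move=> /predU1P[-> | b_gt0]; first by rewrite mulr0 ltxx.
Qed.

Lemma weighted_sum_gt1 (p x : I -> R) :
  (forall j, 0 <= p j) -> \sum_j p j = 1 -> (forall j, 1 < x j) ->
  1 < \sum_j p j * x j.
Proof.
move=> p_ge0 p_sum1 x_gt1.
have [|j /andP[_ pj_gt0]] := @psumr_neq0P _ _ xpredT p (fun j _ => p_ge0 j).
  by rewrite p_sum1; apply/eqP/oner_neq0.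
rewrite -{1}p_sum1 -subr_gt0 -sumrB; apply: (@psumr_gt0 _ j) => [l|].
  by rewrite -[X in _ - X]mulr1 -mulrBr mulr_ge0 // subr_ge0 ltW.
by rewrite -[X in _ - X]mulr1 -mulrBr mulr_gt0 // subr_gt0.
Qed.

End NonnegativeSums.

Section NonnegativeMatrices.
Variable R : numDomainType.

Lemma mxBE m n (A B : 'M[R]_(m, n)) i j : (A - B) i j = A i j - B i j.
Proof. by rewrite !mxE. Qed.

Lemma mulmx_ge0 m n p (A : 'M[R]_(m, n)) (B : 'M[R]_(n, p)) :
  (forall i l, 0 <= A i l) -> (forall l j, 0 <= B l j) ->
  forall i j, 0 <= (A *m B) i j.
Proof. by move=> A_ge0 B_ge0 i j; rewrite mxE sumr_ge0 // => l _; rewrite mulr_ge0. Qed.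

Lemma mulmx_gt0 m n p (A : 'M[R]_(m, n)) (B : 'M[R]_(n, p)) i l j :
  (forall i l, 0 <= A i l) -> (forall l j, 0 <= B l j) ->
  0 < A i l -> 0 < B l j -> 0 < (A *m B) i j.
Proof.
move=> A_ge0 B_ge0 Ail Blj; rewrite mxE (@psumr_gt0 _ _ _ l) ?mulr_gt0 //.
by move=> l'; rewrite mulr_ge0.
Qed.

Lemma mulmx_gt0_exists m n p (A : 'M[R]_(m, n)) (B : 'M[R]_(n, p)) i j :
  (forall i l, 0 <= A i l) -> (forall l j, 0 <= B l j) ->
  0 < (A *m B) i j -> exists l, 0 < A i l /\ 0 < B l j.
Proof.
move=> A_ge0 B_ge0; rewrite mxE => /gt_eqF/negbT/eqP.
case/psumr_neq0P=> [l _ | l /= AAk_gt0]; first by rewrite mulr_ge0.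
by exists l; apply: pmulr_gt0_factors.
Qed.

End NonnegativeMatrices.

Section MatrixPowers.
Variables (R : realType) (m : nat).
Implicit Types (A Pi : 'M[R]_m).

Lemma mxpowS A k : mxpow A k.+1 = A *m mxpow A k.
Proof. by []. Qed.

Lemma mxpow_mulC A k : mxpow A k *m A = A *m mxpow A k.
Proof.
elim: k => [|k IHk]; first by rewrite /mxpow /= mul1mx mulmx1.
by rewrite mxpowS -mulmxA IHk.
Qed.

Lemma mxpow_ge0 A k : (forall i j, 0 <= A i j) -> forall i j, 0 <= mxpow A k i j.
Proof.
move=> A_ge0; elim: k => [|k IHk] i j; first by rewrite mxE ler0n.
by rewrite mxpowS mulmx_ge0.
Qed.

Lemma mxpow_gt0_support Pi A k :
  (forall i j, 0 <= Pi i j) -> (forall i j, 0 <= A i j) ->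
  (forall i j, 0 < Pi i j -> 0 < A i j) ->
  forall i j, 0 < mxpow Pi k i j -> 0 < mxpow A k i j.
Proof.
move=> Pi_ge0 A_ge0 PiA; elim: k => [//|k IHk] i j.
rewrite !mxpowS => /mulmx_gt0_exists[//| |l [Pil Pilj]]; first exact: mxpow_ge0.
by apply: (@mulmx_gt0 _ _ _ _ _ _ _ l); rewrite ?PiA ?IHk //; apply: mxpow_ge0.
Qed.

Lemma primitive_Amx Pi (x : 'I_m -> R) :
  (forall i j, 0 <= Pi i j) -> primitive Pi -> (forall j, 0 < x j) ->
  primitive (Amx Pi x).
Proof.
move=> Pi_ge0 [k [k_gt0 Pik_gt0]] x_gt0; exists k; split=> // i j.
apply: (@mxpow_gt0_support Pi _ k Pi_ge0) => // [i' j' | i' j' Pi_gt0]; rewrite mxE.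
  by rewrite mulr_ge0 // ltW.
by rewrite mulr_gt0.
Qed.

End MatrixPowers.

Section Diffusion.
Variables (R : realType) (m : nat).
Implicit Types (A : 'M[R]_m) (u v : 'cV[R]_m).

Lemma diffusion_small_seed_of_supersolution A v :
  (forall i, 0 < v i 0 /\ v i 0 < (A *m v) i 0) -> diffusion_small_seed A.
Proof.
move=> v_super eps eps_gt0.
have v_gt0 i : 0 < v i 0 by have [] := v_super i.
pose s := 1 + \sum_i v i 0.
have v_lt_s i : v i 0 < s.
  rewrite /s (bigD1 i) //= addrCA ltrDl ltr_pwDl //.
  by apply: sumr_ge0 => j _; apply/ltW/v_gt0.
have s_gt0 : 0 < s by rewrite ltr_pwDl // sumr_ge0 // => j _; apply/ltW/v_gt0.
exists ((eps / s) *: v) => i; have [vi_gt0 vi_lt] := v_super i.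
have c_gt0 : 0 < eps / s by rewrite divr_gt0.
rewrite -scalemxAr !mxE; split.
  by rewrite mulr_gt0 //= mulrAC ltr_pdivrMr // ltr_pM2l.
by rewrite ltr_pM2l //; move: vi_lt; rewrite mxE.
Qed.

Lemma diffusion_of_primitive_subinvariant A u :
  (forall i j, 0 <= A i j) -> primitive A ->
  (forall i, 0 <= u i 0) -> (forall i, u i 0 <= (A *m u) i 0) ->
  (exists i, u i 0 < (A *m u) i 0) -> diffusion_small_seed A.
Proof.
move=> A_ge0 [k [_ Ak_gt0]] u_ge0 u_sub [i1 u_lt].
have u_ge0' i j : 0 <= u i j by rewrite [j]ord1.
have [l [_ ul_gt0]] : exists l, 0 < A i1 l /\ 0 < u l 0.
  by apply: mulmx_gt0_exists => //; apply: le_lt_trans u_lt.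
have w_ge0 i j : 0 <= (A *m u - u) i j by rewrite [j]ord1 mxBE subr_ge0.
have w_gt0 : 0 < (A *m u - u) i1 0 by rewrite mxBE subr_gt0.
have Ak_ge0 i j : 0 <= mxpow A k i j by apply: ltW.
apply: (@diffusion_small_seed_of_supersolution A (mxpow A k *m u)) => i.
split; first exact: (@mulmx_gt0 _ _ _ _ _ _ _ l).
rewrite -subr_gt0 -mxBE mulmxA -mxpow_mulC -mulmxA -mulmxBr.
exact: (@mulmx_gt0 _ _ _ _ _ _ _ i1).
Qed.

Lemma diffusion_of_subset_row_sums A (S : {set 'I_m}) :
  (forall i j, 0 <= A i j) -> primitive A -> S != finset.set0 ->
  (forall i, i \in S -> 1 < \sum_(j in S) A i j) -> diffusion_small_seed A.
Proof.
move=> A_ge0 A_prim /set0Pn[i0 i0S] S_sums.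
pose u : 'cV[R]_m := \col_i (i \in S)%:R.
have Au_sum i : (A *m u) i 0 = \sum_(j in S) A i j.
  rewrite mxE [RHS]big_mkcond; apply: eq_bigr => j _.
  by rewrite mxE; case: (j \in S); rewrite ?mulr1 ?mulr0.
apply: (@diffusion_of_primitive_subinvariant A u) => // [i|i|].
- by rewrite mxE ler0n.
- rewrite Au_sum mxE; have [/S_sums/ltW //|_] := boolP (i \in S).
  by apply: sumr_ge0 => j _.
- by exists i0; rewrite Au_sum mxE i0S S_sums.
Qed.

Lemma no_diffusion_of_substochastic A :
  (0 < m)%N -> (forall i j, 0 <= A i j) -> (forall i, \sum_j A i j <= 1) ->
  ~ diffusion_small_seed A.
Proof.
move=> m_gt0 A_ge0 A_sums /(_ 1 ltr01)[v v_super].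
have [imax _ v_le] := arg_maxP (fun i => v i 0) (isT : predT (Ordinal m_gt0)).
have [/andP[vmax_gt0 _] vmax_lt] := v_super imax.
move: vmax_lt; apply/negP; rewrite -leNgt mxE.
apply: (@le_trans _ _ (\sum_j A imax j * v imax 0)).
  by apply: ler_sum => j _; rewrite ler_wpM2l //; apply: v_le.
by rewrite -mulr_suml ler_piMl // ltW.
Qed.

End Diffusion.

Section DegreeSeries.
Variables (R : realType) (P w : nat -> R) (f g : nat -> nat -> R).
Hypotheses (P_ge0 : forall d, 0 <= P d) (w_gt0 : forall d, 0 < w d).
Hypotheses (f_d0 : forall d, f d 0%N = 0) (g_d0_gt0 : forall d, 0 < g d 0%N).
Hypothesis f_mono : forall d a b, (a <= b <= d)%N -> f d a <= f d b.

Lemma xterm_ge0 d : 0 <= xterm P w f g d.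
Proof.
case: d => [|d]; first by rewrite /xterm mulr0 !mul0r.
rewrite /xterm divr_ge0 ?(ltW (g_d0_gt0 _)) // !mulr_ge0 ?ler0n ?(ltW (w_gt0 _)) //.
by rewrite -(f_d0 d.+1) f_mono.
Qed.

Lemma xval_gt0 : (exists d, (1 <= d)%N /\ 0 < P d /\ 0 < f d 1%N) ->
  cvgn (series (xterm P w f g)) -> 0 < xval P w f g.
Proof.
move=> [d [d_gt0 [Pd_gt0 fd1_gt0]]] x_cvg.
have x_nondecr : nondecreasing_seq (series (xterm P w f g)).
  by apply/nondecreasing_seqP => n; rewrite seriesSr lerDl xterm_ge0.
apply: lt_le_trans (nondecreasing_cvgn_le x_nondecr x_cvg d.+1).
rewrite seriesSr ltr_pwDr //.
  by rewrite /xterm divr_gt0 // !mulr_gt0 // ltr0n.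
by rewrite /series /= sumr_ge0 // => n _; apply: xterm_ge0.
Qed.

End DegreeSeries.

Theorem corollary3 (R : realType) (m : nat) (Pi : 'M[R]_m)
  (P w : 'I_m -> nat -> R) (f g : 'I_m -> nat -> nat -> R) :
  (0 < m)%N ->
  row_stochastic Pi ->
  primitive Pi ->
  (forall i, degree_distribution (P i)) ->
  (forall i d, 0 < w i d) ->
  (forall i d, f i d 0%N = 0) ->
  (forall i d a b, (a <= b <= d)%N -> f i d a <= f i d b) ->
  (forall i, exists d, (1 <= d)%N /\ 0 < P i d /\ 0 < f i d 1%N) ->
  (forall i d, 0 < g i d 0%N) ->
  (forall i d a b, (a <= b <= d)%N -> g i d b <= g i d a) ->
  (forall i, cvgn (series (xterm (P i) (w i) (f i) (g i)))) ->
  let x := fun i => xval (P i) (w i) (f i) (g i) in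
  let A := Amx Pi x in
  [/\ (forall i, 1 < x i) -> diffusion_small_seed A,
      (forall i, x i <= 1) -> ~ diffusion_small_seed A,
      (exists i, 1 < Pi i i * x i) -> diffusion_small_seed A &
      (exists S : {set 'I_m}, S != finset.set0 /\
         forall i, i \in S -> 1 < \sum_(j in S) Pi i j * x j) ->
        diffusion_small_seed A].
Proof.
move=> m_gt0 [Pi_ge0 Pi_sum1] Pi_prim P_distr w_gt0 f_0 f_mono f_pos g_gt0 _
  x_cvg x A.
have x_gt0 i : 0 < x i.
  by apply: xval_gt0 => //; [case: (P_distr i) | apply: f_mono].
have A_ge0 i j : 0 <= A i j by rewrite mxE mulr_ge0 // ltW.
have A_prim : primitive A by apply: primitive_Amx.
have subset_diffusion (S : {set 'I_m}) : S != finset.set0 ->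
    (forall i, i \in S -> 1 < \sum_(j in S) Pi i j * x j) ->
    diffusion_small_seed A.
  move=> S_n0 S_sums; apply: (@diffusion_of_subset_row_sums _ _ A S) => // i iS.
  by rewrite (eq_bigr (fun j => Pi i j * x j)) ?S_sums // => j _; rewrite mxE.
split.
- move=> x_gt1; apply: (subset_diffusion [set: 'I_m]%SET).
    by apply/set0Pn; exists (Ordinal m_gt0); rewrite finset.in_setT.
  move=> i _; under eq_bigl do rewrite finset.in_setT.
  exact: weighted_sum_gt1.
- move=> x_le1; apply: no_diffusion_of_substochastic => // i.
  rewrite -(Pi_sum1 i); apply: ler_sum => j _.
  by rewrite mxE ler_piMr.
- case=> i Pii_x; apply: (subset_diffusion [set i]%SET).
    by apply/set0Pn; exists i; rewrite finset.set11.
  by move=> j; rewrite finset.in_set1 finset.big_set1 => /eqP ->.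
- by case=> S [S_n0 S_sums]; exact: (subset_diffusion S).
Qed.
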